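(* The set $\mathcal{M}^+(X)$ of fully-supported Borel probability measures on $X=A^{\mathbb{N}}$ is a complete metric space with respect to the projective distance \[ \rho(\mu,\nu)=\sup_{n\in\mathbb{N}}\max_{\pmb{a}\in A^n}\frac{1}{n}\left|\log\frac{\mu[\pmb{a}]}{\nu[\pmb{a}]}\right|. \]
   Context: $A$ is a finite alphabet and $X=A^{\mathbb{N}}$ carries the product (Tychonoff) topology and its Borel $\sigma$-algebra. For a word $\pmb{a}=a_1\cdots a_n\in A^n$, the cylinder set is $[\pmb{a}]=\{\pmb{x}\in X:\ x_1\cdots x_n=\pmb{a}\}$. $\mathcal{M}^+(X)$ denotes the set of Borel probability measures $\mu$ on $X$ with $\mu[\pmb{a}]>0$ for every finite word $\pmb{a}\in\bigcup_{n\in\mathbb{N}}A^n$. *)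

From HB Require Import structures.
From mathcomp Require Import all_boot all_order all_algebra.
From mathcomp Require Import all_classical all_reals all_analysis.
Set Implicit Arguments. Unset Strict Implicit. Unset Printing Implicit Defensive.
Import Order.TTheory GRing.Theory Num.Theory.
Local Open Scope classical_set_scope.
Local Open Scope ring_scope.

(* The alphabet [A] is a (pointed, hence nonempty) type, assumed finite
   in the theorem.  The topological space X = A^N with the product
   (Tychonoff) topology of the discrete topology on A. *)
Definition Xtop (A : pointedType) : topologicalType :=
  prod_topology (fun _ : nat => discrete_topology A).

Definition Xborel (A : pointedType) :=
  g_sigma_algebraType (@open (Xtop A)).

(* Cylinder set of a word a = a_1 ... a_n (0-based indices in Rocq). *)
Definition cyl (A : pointedType) (n : nat) (a : n.-tuple A) : set (Xborel A) :=
  [set x : Xborel A | forall i : 'I_n, x (nat_of_ord i) = tnth a i].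

Definition fully_supported (A : pointedType) (R : realType)
    (mu : probability (Xborel A) R) : Prop :=
  forall (n : nat) (a : n.-tuple A), (0 < mu (cyl a))%E.

(* Projective distance, n ranging over {1,2,...} (words of length n.+1),
   the sup over n and max over words combined into one extended-real sup. *)
Definition rho (A : pointedType) (R : realType)
    (mu nu : probability (Xborel A) R) : \bar R :=
  ereal_sup [set r | exists (n : nat) (a : n.+1.-tuple A),
     r = ((n.+1)%:R^-1 *
          `| ln (fine (mu (cyl a)) / fine (nu (cyl a))) |)%:E].

From HB Require Import structures.
From mathcomp Require Import all_boot all_order all_algebra.
From mathcomp Require Import all_classical all_reals all_analysis.
Import Order.TTheory GRing.Theory Num.Theory numFieldNormedType.Exports.
Local Open Scope classical_set_scope.
Local Open Scope ring_scope.
Set Implicit Arguments. Unset Strict Implicit. Unset Printing Implicit Defensive.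

(* The cylinders form a countable pi-system generating the Borel sets, so a
   measure is determined by its cylinder masses, and the metric axioms reduce to
   facts about [|ln mu[a] - ln nu[a]| / n] word by word.  For completeness, if
   (u m) is rho-Cauchy then for every word a of length n the numbers
   ln (u m)[a] are Cauchy with modulus n * eps, so (u m)[a] tends to some
   P a > 0 with P a = sum_c P (a c).  Such a consistent family is the cylinder
   mass function of a probability measure nu, and letting k -> oo in
   |ln (u m)[a] - ln (u k)[a]| <= n * eps gives rho (u m) nu <= eps. *)

Section Cylinders.
Variable A : pointedType.

Definition pcyl n (x : nat -> A) : set (Xborel A) :=
  [set y | forall i, (i < n)%N -> y i = x i].

Definition upd (x : nat -> A) n c : nat -> A :=
  fun i => if i == n then c else x i.

Lemma upd_lt x n c i : (i < n)%N -> upd x n c i = x i.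
Proof. by move=> lt_in; rewrite /upd ifN // neq_ltn lt_in. Qed.

Lemma upd_id x n : upd x n (x n) = x.
Proof. by apply/funext => i; rewrite /upd; case: eqP => // ->. Qed.

Lemma pcyl0 x : pcyl 0 x = setT.
Proof. by apply/seteqP; split => y // _ i. Qed.

Lemma eq_pcyl n x y : (forall i, (i < n)%N -> x i = y i) -> pcyl n x = pcyl n y.
Proof. by move=> xy; apply/seteqP; split => z zx i lt_in; rewrite zx ?xy. Qed.

Lemma cylE n (a : n.-tuple A) : cyl a = pcyl n (nth point a).
Proof.
apply/seteqP; split => y ya.
  by move=> i lt_in; have := ya (Ordinal lt_in); rewrite (tnth_nth point).
by move=> i; rewrite ya // (tnth_nth point).
Qed.

Lemma pcylE n x : pcyl n x = cyl [tuple x i | i < n].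
Proof.
apply/seteqP; split => y yx.
  by move=> i; rewrite tnth_mktuple yx.
by move=> i lt_in; have := yx (Ordinal lt_in); rewrite tnth_mktuple.
Qed.

Lemma nbhs_pcyl n (x : Xtop A) : nbhs x (pcyl n x : set (Xtop A)).
Proof.
have F := @nbhs_pfilter (Xtop A) x.
elim: n => [|n IH]; first by rewrite pcyl0; exact: (@filterT _ _ F).
have xn : nbhs x [set y : Xtop A | y n = x n].
  exact: (@proj_continuous nat (fun=> discrete_topology A) n x [set x n]).
apply: (@filterS _ _ F _ _ _ (@filterI _ _ F _ _ IH xn)) => y [yx ynx] i.
by rewrite ltnS leq_eqVlt => /predU1P[->|/yx].
Qed.

Lemma open_pcyl n x : @open (Xtop A) (pcyl n x).
Proof.
rewrite openE => y yx; rewrite /interior.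
have -> : (pcyl n x : set (Xtop A)) = pcyl n y.
  by apply: eq_pcyl => i lt_in; rewrite yx.
exact: nbhs_pcyl.
Qed.

Lemma open_pcyl_sub (O : set (Xtop A)) x : open O -> O x ->
  exists n, (pcyl n x : set (Xtop A)) `<=` O.
Proof.
move=> oO Ox.
pose F := filter_from [set: nat] (fun n => (pcyl n x : set (Xtop A))).
have FF : Filter F.
  apply: filter_from_filter; first by exists 0%N.
  move=> i j _ _; exists (maxn i j) => // y yx; split => k lt_k; apply: yx.
    by rewrite (leq_trans lt_k) // leq_maxl.
  by rewrite (leq_trans lt_k) // leq_maxr.
have Fx : F --> (x : Xtop A).
  apply/(@cvg_sup _ _ _ F x FF) => i U /= iU.
  pose W := initial_topology (fun f : (forall _ : nat, discrete_topology A) => f i).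
  have : @nbhs W W (x : W) U by exact: iU.
  rewrite nbhsE /= => -[B [[C oC CB] Bx] BU].
  exists i.+1 => // y yx; apply: BU; rewrite -CB /= yx //.
  by move: Bx; rewrite -CB.
have /Fx[n _ xnO] : nbhs (x : Xtop A) O by exact: open_nbhs_nbhs.
by exists n.
Qed.

Lemma measurable_pcyl n x : measurable (pcyl n x).
Proof. by apply: sub_sigma_algebra; exact: open_pcyl. Qed.

Lemma measurable_cyl n (a : n.-tuple A) : measurable (cyl a).
Proof. by rewrite cylE; exact: measurable_pcyl. Qed.

Definition pcyls : set (set (Xborel A)) :=
  [set S | S = set0 \/ exists n x, S = pcyl n x].

Lemma pcylI n m x y : (n <= m)%N -> pcyls (pcyl n x `&` pcyl m y).
Proof.
move=> le_nm; have [yx|yx] := pselect (forall i, (i < n)%N -> y i = x i).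
  right; exists m, y; apply/seteqP; split => z; first by case.
  by move=> zy; split => // i lt_in; rewrite zy ?yx // (leq_trans lt_in).
left; apply/seteqP; split => z // [zx zy]; apply: yx => i lt_in.
by rewrite -zy ?zx // (leq_trans lt_in).
Qed.

Lemma setI_closed_pcyls : setI_closed pcyls.
Proof.
move=> S T [->|[n [x ->]]] [->|[m [y ->]]]; try by left; rewrite ?set0I ?setI0.
have [le_nm|lt_mn] := leqP n m; first exact: pcylI.
by rewrite setIC; apply: pcylI; rewrite ltnW.
Qed.

Variable finA : finite_set [set: A].

Definition letters : seq A := finmap.enum_fset (fset_set [set: A]).

Lemma mem_letters c : c \in letters.
Proof. by rewrite /letters in_fset_set // inE. Qed.

Lemma uniq_letters : uniq letters.
Proof. exact: finmap.fset_uniq. Qed.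

Lemma index_letters_lt c : (index c letters < size letters)%N.
Proof. by rewrite index_mem mem_letters. Qed.

(* Words are coded by lists of indices into [letters]: this makes the set of
   cylinders countable although [A] itself carries no countType structure. *)
Definition of_indices (b : seq nat) : nat -> A :=
  fun i => nth point letters (nth 0%N b i).

Lemma pcyl_indices n x :
  pcyl n (of_indices [seq index (x i) letters | i <- iota 0 n]) = pcyl n x.
Proof.
apply: eq_pcyl => i lt_in.
by rewrite /of_indices (nth_map 0%N) ?size_iota // nth_iota // nth_index ?mem_letters.
Qed.

Lemma Xborel_measurableE : @measurable _ (Xborel A) = <<s pcyls >>.
Proof.
apply/seteqP; split; last first.
  apply: sub_sigma_algebra2 => S [->|[n [x ->]]]; [exact: open0|exact: open_pcyl].
apply: smallest_sub; first exact: smallest_sigma_algebra.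
move=> O oO.
pose C (p : nat * seq nat) := pcyl p.1 (of_indices p.2).
have -> : O = \bigcup_(p in [set p | C p `<=` O]) C p.
  apply/seteqP; split => [y Oy|y [p pO /pO //]].
  have [n nO] := open_pcyl_sub oO Oy.
  by exists (n, [seq index (y i) letters | i <- iota 0 n]);
    rewrite /C /= pcyl_indices.
have -> : <<s pcyls >> = @measurable _ (g_sigma_algebraType pcyls) by [].
rewrite bigcup_mkcond; apply: countable_bigcupT_measurable => // p.
case: ifPn => _; last exact: measurable0.
by apply: sub_sigma_algebra; right; exists p.1, (of_indices p.2).
Qed.

End Cylinders.

Section Metric.
Variables (A : pointedType) (R : realType).
Implicit Types mu nu eta : probability (Xborel A) R.

Lemma eq_probability_pcyl mu nu : finite_set [set: A] ->
  (forall n x, mu (pcyl n x) = nu (pcyl n x)) ->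
  forall B, measurable B -> mu B = nu B.
Proof.
move=> finA munu; apply: (measure_unique _ (fun=> setT)
  (Xborel_measurableE finA) (@setI_closed_pcyls A)) => //.
- by move=> _; right; exists 0%N, (fun=> point); rewrite pcyl0.
- by rewrite bigcup_const.
- by move=> S /= [->|[n [x ->]]]; rewrite ?measure0 ?munu.
- by move=> _; rewrite (le_lt_trans (probability_le1 _ measurableT)) ?ltry.
Qed.

Lemma measure_cyl_fin_num mu n (a : n.-tuple A) : mu (cyl a) \is a fin_num.
Proof. by apply: fin_num_measure; exact: measurable_cyl. Qed.

Lemma fine_cyl_gt0 mu : fully_supported mu ->
  forall n (a : n.-tuple A), 0 < fine (mu (cyl a)).
Proof. by move=> mu_pos n a; rewrite fine_gt0 // mu_pos -ge0_fin_numE ?measure_cyl_fin_num. Qed.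

Definition rho_term mu nu n (a : n.+1.-tuple A) : R :=
  n.+1%:R^-1 * `|ln (fine (mu (cyl a))) - ln (fine (nu (cyl a)))|.

Lemma rho_term_ge0 mu nu n (a : n.+1.-tuple A) : 0 <= rho_term mu nu a.
Proof. by rewrite mulr_ge0 // invr_ge0. Qed.

Lemma rhoE mu nu : fully_supported mu -> fully_supported nu ->
  rho mu nu = ereal_sup [set r | exists n (a : n.+1.-tuple A),
    r = (rho_term mu nu a)%:E].
Proof.
move=> mu_pos nu_pos; congr ereal_sup; apply/seteqP.
by split => r [n [a ->]]; exists n, a; rewrite /rho_term ln_div ?posrE ?fine_cyl_gt0.
Qed.

Lemma rho_term_le mu nu : fully_supported mu -> fully_supported nu ->
  forall n (a : n.+1.-tuple A), ((rho_term mu nu a)%:E <= rho mu nu)%E.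
Proof. by move=> mu_pos nu_pos n a; rewrite rhoE //; apply: ereal_sup_ubound; exists n, a. Qed.

Lemma rho_ge0 mu nu : fully_supported mu -> fully_supported nu ->
  (0 <= rho mu nu)%E.
Proof.
move=> mu_pos nu_pos; apply: le_trans (rho_term_le mu_pos nu_pos [tuple point | i < 1]).
by rewrite lee_fin rho_term_ge0.
Qed.

Lemma rhoC mu nu : fully_supported mu -> fully_supported nu ->
  rho mu nu = rho nu mu.
Proof.
move=> mu_pos nu_pos; rewrite !rhoE //; congr ereal_sup; apply/seteqP.
by split => r [n [a ->]]; exists n, a; rewrite /rho_term distrC.
Qed.

Lemma rho_triangle mu nu eta : fully_supported mu -> fully_supported nu ->
  fully_supported eta -> (rho mu eta <= rho mu nu + rho nu eta)%E.
Proof.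
move=> mu_pos nu_pos eta_pos; rewrite [X in (X <= _)%E]rhoE //.
apply: ge_ereal_sup => _ [n [a ->]].
apply: le_trans (leeD (rho_term_le mu_pos nu_pos a) (rho_term_le nu_pos eta_pos a)).
rewrite -EFinD lee_fin /rho_term -mulrDr ler_wpM2l ?invr_ge0 //.
by rewrite (le_trans _ (ler_normD _ _)) // addrA subrK.
Qed.

Lemma rho_eq0P mu nu : finite_set [set: A] ->
  fully_supported mu -> fully_supported nu ->
  rho mu nu = 0%E <-> (forall B, measurable B -> mu B = nu B).
Proof.
move=> finA mu_pos nu_pos; split => [rho0|munu].
  apply: eq_probability_pcyl => // -[|n] x; first by rewrite pcyl0 !probability_setT.
  rewrite pcylE -[LHS]fineK ?measure_cyl_fin_num// -[RHS]fineK ?measure_cyl_fin_num//.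
  congr EFin; set a := [tuple x i | i < n.+1].
  have : ((rho_term mu nu a)%:E <= 0)%E by rewrite -rho0 rho_term_le.
  rewrite lee_fin /rho_term pmulr_rle0 ?invr_gt0 // normr_le0 subr_eq0 => /eqP.
  by apply: ln_inj; rewrite posrE fine_cyl_gt0.
apply/eqP; rewrite eq_le rho_ge0 // andbT rhoE //.
apply: ge_ereal_sup => _ [n [a ->]].
by rewrite /rho_term munu ?subrr ?normr0 ?mulr0 //; exact: measurable_cyl.
Qed.

End Metric.

Lemma nondecreasing_bracket (R : realDomainType) (f : nat -> R) (k : nat) (t : R) :
  {homo f : i j / (i <= j)%N >-> i <= j} -> f 0%N <= t -> t < f k ->
  exists2 j, (j < k)%N & f j <= t < f j.+1.
Proof.
move=> f_homo f0t; elim: k => [|k IH] tfk; first by move: (le_lt_trans f0t tfk); rewrite ltxx.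
have [/IH[j lt_jk fjt]|fkt] := ltP t (f k); first by exists j => //; exact: ltnW.
by exists k => //; rewrite fkt tfk.
Qed.

Lemma uniform01E (R : realType) (U : set R) : measurable U ->
  uniform_prob (@ltr01 R) U = lebesgue_measure (U `&` `[0, 1]%classic).
Proof.
move=> mU; rewrite /uniform_prob integral_uniform_pdf.
transitivity (\int[lebesgue_measure]_(x in U `&` `[0%R, 1%R]%classic) (cst 1%:E) x)%E.
  apply: eq_integral => x; rewrite inE => -[_]; rewrite /= in_itv /= => x01.
  by rewrite /uniform_pdf x01 subr0 invr1.
by rewrite integral_cst ?mul1e //; apply: measurableI => //; exact: measurable_itv.
Qed.

(* A consistent family of cylinder masses is realised by a probability measure:
   the cylinders of depth [n] are coded by consecutive subintervals of [[0, 1[]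
   of lengths [P n x], nested along prefixes, and Lebesgue measure is pushed
   forward by the map reading off the word whose intervals contain [t]. *)
Section ConsistentFamily.
Variables (A : pointedType) (R : realType).
Variable finA : finite_set [set: A].
Local Notation letters := (letters A).
Local Notation mem_letters := (mem_letters finA).
Local Notation index_letters_lt := (index_letters_lt finA).

Variable P : nat -> (nat -> A) -> R.
Hypothesis P0 : forall x, P 0 x = 1.
Hypothesis P_ge0 : forall n x, 0 <= P n x.
Hypothesis eq_P : forall n x y, (forall i, (i < n)%N -> x i = y i) -> P n x = P n y.
Hypothesis P_split : forall n x, P n x = \sum_(c <- letters) P n.+1 (upd x n c).

Definition child_mass n x j := \sum_(c <- take j letters) P n.+1 (upd x n c).
Definition left_end n x := \sum_(0 <= i < n) child_mass i x (index (x i) letters).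
Definition code_itv n x : set R := [set t | left_end n x <= t < left_end n x + P n x].

Lemma eq_child_mass n x y j : (forall i, (i < n)%N -> x i = y i) ->
  child_mass n x j = child_mass n y j.
Proof.
move=> xy; apply: eq_bigr => c _; apply: eq_P => i lt_in; rewrite /upd.
by case: eqP => // /eqP ne; apply: xy; rewrite ltn_neqAle ne -ltnS.
Qed.

Lemma eq_left_end n x y : (forall i, (i < n)%N -> x i = y i) ->
  left_end n x = left_end n y.
Proof.
move=> xy; apply: eq_big_nat => i /andP[_ lt_in].
by rewrite xy //; apply: eq_child_mass => k lt_ki; apply: xy; exact: ltn_trans lt_ki lt_in.
Qed.

Lemma eq_code_itv n x y : (forall i, (i < n)%N -> x i = y i) ->
  code_itv n x = code_itv n y.
Proof. by move=> xy; rewrite /code_itv (eq_left_end xy) (eq_P xy). Qed.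

Lemma code_itvE n x : code_itv n x = `[left_end n x, left_end n x + P n x[%classic.
Proof. by apply/seteqP; split => t; rewrite /= in_itv. Qed.

Lemma child_mass0 n x : child_mass n x 0 = 0.
Proof. by rewrite /child_mass take0 big_nil. Qed.

Lemma child_mass_size n x : child_mass n x (size letters) = P n x.
Proof. by rewrite /child_mass take_size -P_split. Qed.

Lemma child_massS n x j : (j < size letters)%N ->
  child_mass n x j.+1 = child_mass n x j + P n.+1 (upd x n (nth point letters j)).
Proof. by move=> lt_j; rewrite /child_mass (take_nth point lt_j) -cats1 big_cat big_seq1. Qed.

Lemma child_mass_homo n x : {homo child_mass n x : i j / (i <= j)%N >-> i <= j}.
Proof.
apply: homo_leq => [?|? ? ?|j]; [exact: lexx|exact: le_trans|].
have [lt_j|ge_j] := ltnP j (size letters); first by rewrite child_massS // lerDl.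
by rewrite /child_mass !take_oversize // ltnW.
Qed.

Lemma child_mass_ge0 n x j : 0 <= child_mass n x j.
Proof. by rewrite -(child_mass0 n x) child_mass_homo. Qed.

Lemma left_end_upd n x c :
  left_end n.+1 (upd x n c) = left_end n x + child_mass n x (index c letters).
Proof.
rewrite /left_end big_nat_recr //=; congr (_ + _).
  by apply: eq_left_end => i; exact: upd_lt.
by rewrite /upd eqxx; apply: eq_child_mass => i; exact: upd_lt.
Qed.

Lemma code_itv_upd n x c : code_itv n.+1 (upd x n c) =
  [set t | left_end n x + child_mass n x (index c letters) <= t <
           left_end n x + child_mass n x (index c letters).+1].
Proof.
by rewrite /code_itv left_end_upd child_massS ?index_letters_lt // nth_index ?mem_letters // addrA.
Qed.

Lemma code_itv_upd_sub n x c : code_itv n.+1 (upd x n c) `<=` code_itv n x.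
Proof.
rewrite code_itv_upd => t /andP[lt1 lt2]; apply/andP; split.
  by rewrite (le_trans _ lt1) // lerDl child_mass_ge0.
by rewrite (lt_le_trans lt2) // lerD2l -child_mass_size child_mass_homo // index_letters_lt.
Qed.

Lemma code_itvS n x : code_itv n.+1 x `<=` code_itv n x.
Proof. by rewrite -{1}(upd_id x n); exact: code_itv_upd_sub. Qed.

Lemma code_itv0 x : code_itv 0 x = [set t | 0 <= t < 1].
Proof. by rewrite /code_itv /left_end big_geq // add0r P0. Qed.

Lemma code_itv_sub01 n x t : code_itv n x t -> 0 <= t < 1.
Proof.
have : code_itv n x `<=` code_itv 0 x by elim: n => // n IH s /code_itvS; exact: IH.
by rewrite code_itv0 => /[apply].
Qed.

Lemma code_itv_cover n x t : code_itv n x t -> exists c, code_itv n.+1 (upd x n c) t.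
Proof.
move=> /andP[lt1 lt2].
case: (@nondecreasing_bracket _ (fun j => left_end n x + child_mass n x j)
  (size letters) t).
- by move=> i k le_ik; rewrite lerD2l child_mass_homo.
- by rewrite child_mass0 addr0.
- by rewrite child_mass_size.
move=> j lt_j mjt.
by exists (nth point letters j); rewrite code_itv_upd index_uniq // uniq_letters.
Qed.

Lemma code_itv_upd_disj n x c c' : c != c' ->
  code_itv n.+1 (upd x n c) `&` code_itv n.+1 (upd x n c') = set0.
Proof.
wlog lt_cc' : c c' / (index c letters < index c' letters)%N => [W ne|_].
  have : index c letters != index c' letters.
    by apply: contra ne => /eqP e; rewrite -(nth_index point (mem_letters c)) e nth_index ?mem_letters.
  rewrite neq_ltn => /orP[lt|lt]; first exact: W.
  by rewrite setIC W // eq_sym.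
apply/seteqP; split => t // []; rewrite !code_itv_upd => /andP[_ lt1] /andP[lt2 _].
have := le_lt_trans lt2 lt1; rewrite ltrD2l => lt.
by move: (lt_le_trans lt (child_mass_homo n x lt_cc')); rewrite ltxx.
Qed.

Lemma code_itv_disj n x y : (exists2 i, (i < n)%N & x i <> y i) ->
  code_itv n x `&` code_itv n y = set0.
Proof.
elim: n x y => [|n IH] x y [i lt_in xy] //.
have [[k lt_kn xyk]|agree] := pselect (exists2 k, (k < n)%N & x k <> y k).
  apply/seteqP; split => t // [/code_itvS xt /code_itvS yt].
  by rewrite -(IH x y); [split|exists k].
have {}agree k : (k < n)%N -> x k = y k.
  by move=> lt_kn; apply: contrapT => xyk; apply: agree; exists k.
have e_in : i = n.
  by apply/eqP; rewrite eqn_leq -ltnS lt_in leqNgt; apply/negP => /agree.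
rewrite {}e_in in xy.
rewrite -(upd_id x n) -(upd_id y n).
have -> : code_itv n.+1 (upd y n (y n)) = code_itv n.+1 (upd x n (y n)).
  apply: eq_code_itv => k lt_k; rewrite /upd; case: eqP => // /eqP ne.
  by rewrite agree // ltn_neqAle ne -ltnS.
exact/code_itv_upd_disj/eqP.
Qed.

Definition next_letter n (x : nat -> A) (t : R) : A :=
  nth point letters (find (fun c => (left_end n.+1 (upd x n c) <= t) &&
                          (t < left_end n.+1 (upd x n c) + P n.+1 (upd x n c))) letters).

Fixpoint decode_prefix (t : R) n : nat -> A :=
  if n is m.+1 then upd (decode_prefix t m) m (next_letter m (decode_prefix t m) t)
  else fun=> point.

Definition decode_word (t : R) : nat -> A := fun i => decode_prefix t i.+1 i.

Lemma decode_prefix_stable t n m : (n <= m)%N ->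
  forall i, (i < n)%N -> decode_prefix t m i = decode_prefix t n i.
Proof.
elim: m => [|m IH]; first by rewrite leqn0 => /eqP ->.
rewrite leq_eqVlt => /predU1P[-> //|lt_nm] i lt_in /=.
by rewrite upd_lt ?IH // (leq_trans lt_in lt_nm).
Qed.

Lemma decode_wordE t n i : (i < n)%N -> decode_word t i = decode_prefix t n i.
Proof. by move=> lt_in; rewrite /decode_word (decode_prefix_stable t lt_in). Qed.

Lemma code_itv_decode_prefix t : 0 <= t < 1 -> forall n, code_itv n (decode_prefix t n) t.
Proof.
move=> t01; elim => [|n IH]; first by rewrite code_itv0.
have [c ct] := code_itv_cover IH.
rewrite /= /next_letter; set p := (fun c => _).
have : has p letters by apply/hasP; exists c => //; exact: mem_letters.
by move/(nth_find point).
Qed.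

Lemma pcyl_decode_word t n x : 0 <= t < 1 ->
  pcyl n x (decode_word t) <-> code_itv n x t.
Proof.
move=> t01; split => [tx|xt].
  rewrite (@eq_code_itv n x (decode_prefix t n)); first exact: code_itv_decode_prefix.
  by move=> i lt_in; rewrite -tx // (decode_wordE t lt_in).
move=> i lt_in; apply: contrapT => ne.
have : code_itv n (decode_prefix t n) `&` code_itv n x = set0.
  by apply: code_itv_disj; exists i => //; rewrite -(decode_wordE t lt_in).
by move/seteqP => [/(_ t) empty _]; apply: empty; split => //; exact: code_itv_decode_prefix.
Qed.

Definition decode (t : R) : Xborel A :=
  decode_word (if (0 <= t) && (t < 1) then t else 0).

Lemma preimage_decode_pcyl n x : decode @^-1` (pcyl n x) =
  code_itv n x `|` [set t | ~~ ((0 <= t) && (t < 1)) /\ code_itv n x 0].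
Proof.
have t01 : (0 <= 0 :> R) && (0 < 1 :> R) by rewrite lexx ltr01.
apply/seteqP; split => t; rewrite /decode /=.
  case: ifPn => t_in; first by move/(pcyl_decode_word _ _ t_in); left.
  by move/(pcyl_decode_word _ _ t01); right.
case: ifPn => t_in; first by case=> [/(pcyl_decode_word _ _ t_in)|[/negP]].
case=> [/code_itv_sub01 t_in'|[_ /(pcyl_decode_word _ _ t01)//]].
by rewrite t_in' in t_in.
Qed.

Lemma measurable_decode : measurable_fun [set: R] decode.
Proof.
apply: (measurability _ (Xborel_measurableE finA)) => _ [B [->|[n [x ->]]] <-].
  by rewrite preimage_set0 setI0.
rewrite setTI preimage_decode_pcyl; apply: measurableU.
  by rewrite code_itvE; exact: measurable_itv.
have [x0|x0] := pselect (code_itv n x 0).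
  have -> : [set t : R | ~~ ((0 <= t) && (t < 1)) /\ code_itv n x 0] =
      ~` (`[0, 1[%classic : set R).
    by apply/seteqP; split => t /=; rewrite in_itv /=; [case=> /negP|move/negP].
  by apply: measurableC; exact: measurable_itv.
have -> : [set t : R | ~~ ((0 <= t) && (t < 1)) /\ code_itv n x 0] = set0.
  by apply/seteqP; split => t // [].
exact: measurable0.
Qed.

Definition decode_mfun : {mfun measurableTypeR R >-> Xborel A} :=
  HB.pack (decode : measurableTypeR R -> Xborel A)
    (@isMeasurableFun.Build _ _ (measurableTypeR R) (Xborel A) decode measurable_decode).

Definition consistent_prob : probability (Xborel A) R :=
  distribution (uniform_prob (@ltr01 R)) decode_mfun.

Lemma lebesgue_measure_code_itv n x : lebesgue_measure (code_itv n x) = (P n x)%:E.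
Proof.
rewrite code_itvE lebesgue_measure_itv /= lte_fin ltrDl.
case: ltP => [P_gt0|P_le0]; first by rewrite -EFinD addrC addKr.
by congr EFin; apply/eqP; rewrite eq_le P_le0 P_ge0.
Qed.

Lemma preimage_decode_pcyl_sandwich n x :
  code_itv n x `<=` decode @^-1` pcyl n x `&` `[0, 1]%classic /\
  decode @^-1` pcyl n x `&` `[0, 1]%classic `<=` code_itv n x `|` [set 1].
Proof.
rewrite preimage_decode_pcyl; split => t.
  by move=> xt; have /andP[t0 t1] := code_itv_sub01 xt; split; [left|rewrite /= in_itv /= t0 ltW].
case=> [xt]; rewrite /= in_itv /= => /andP[t0 t1]; case: xt => [xt|[t_out _]]; first by left.
by right; apply/eqP; rewrite eq_le t1 /= leNgt; apply: contra t_out => ->; rewrite t0.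
Qed.

Lemma consistent_probE n x : consistent_prob (pcyl n x) = (P n x)%:E.
Proof.
have m_pre : measurable (decode @^-1` pcyl n x).
  by rewrite -[X in measurable X]setTI; apply: measurable_decode => //; exact: measurable_pcyl.
have m_itv : measurable (code_itv n x) by rewrite code_itvE; exact: measurable_itv.
have m_pre01 : measurable (decode @^-1` pcyl n x `&` `[0, 1]%classic).
  by apply: measurableI => //; exact: measurable_itv.
rewrite /consistent_prob /distribution /pushforward /= uniform01E //.
have [itv_sub sub_itv1] := preimage_decode_pcyl_sandwich n x.
apply/eqP; rewrite eq_le -lebesgue_measure_code_itv; apply/andP; split.
  rewrite -(measureU0 (mu := lebesgue_measure) m_itv (measurable_set1 1)); last first.
    exact: lebesgue_measure_set1.
  by apply: le_measure => //; rewrite inE //; exact: measurableU.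
by apply: le_measure => //; rewrite inE.
Qed.

End ConsistentFamily.

Section Completeness.
Variables (A : pointedType) (R : realType).
Variable finA : finite_set [set: A].
Local Notation letters := (letters A).

Lemma pcyl_split n x :
  pcyl n x = \big[setU/set0]_(c <- letters) pcyl n.+1 (upd x n c).
Proof.
rewrite -bigcup_seq; apply/seteqP; split => [y yx|y [c _ yxc] i lt_in].
  exists (y n); first exact: mem_letters.
  move=> i; rewrite ltnS leq_eqVlt => /predU1P[->|lt_in]; first by rewrite /upd eqxx.
  by rewrite upd_lt // yx.
by rewrite yxc ?upd_lt // ltnW.
Qed.

Lemma measure_pcyl_split (mu : probability (Xborel A) R) n x :
  mu (pcyl n x) = (\sum_(c <- letters) mu (pcyl n.+1 (upd x n c)))%E.
Proof.
rewrite pcyl_split measure_fbigsetU // => [c _|c c' _ _ [y [yc yc']]].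
  exact: measurable_pcyl.
by have := yc n (ltnSn n); have := yc' n (ltnSn n); rewrite /upd eqxx => -> ->.
Qed.

Variable u : nat -> probability (Xborel A) R.
Hypothesis u_pos : forall k, fully_supported (u k).
Hypothesis u_cauchy : forall e : R, 0 < e -> exists N : nat, forall m k : nat,
  (N <= m)%N -> (N <= k)%N -> (rho (u m) (u k) < e%:E)%E.

Definition log_mass n x m := ln (fine (u m (pcyl n x))).

Lemma log_mass_dist (e : R) N : (forall m k, (N <= m)%N -> (N <= k)%N ->
    (rho (u m) (u k) < e%:E)%E) ->
  forall n x m k, (N <= m)%N -> (N <= k)%N ->
  `|log_mass n x m - log_mass n x k| <= n%:R * e.
Proof.
move=> close [|n] x m k le_Nm le_Nk.
  by rewrite /log_mass pcyl0 !probability_setT /= ln1 subrr normr0 mul0r.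
have := rho_term_le (u_pos m) (u_pos k) [tuple x i | i < n.+1].
move/le_lt_trans/(_ (close m k le_Nm le_Nk)); rewrite lte_fin /rho_term -pcylE.
by rewrite ltr_pdivrMl // => /ltW.
Qed.

Lemma cvgn_log_mass n x : cvgn (log_mass n x).
Proof.
apply/cauchy_cvgP/cauchy_ballP => e e_gt0; near_simpl.
have [N close] := u_cauchy (divr_gt0 e_gt0 (ltr0Sn R n)).
exists ([set m | (N <= m)%N], [set m | (N <= m)%N]); first by split; exists N.
move=> [m k] [/= le_Nm le_Nk]; rewrite -ball_normE /=.
apply: le_lt_trans (log_mass_dist close n x le_Nm le_Nk) _.
by rewrite mulrA ltr_pdivrMr ?ltr0Sn // mulrC ltr_pM2l // ltr_nat.
Qed.

Definition lim_mass n x := expR (limn (log_mass n x)).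

Lemma measure_pcyl_cvg n x : (fun m => fine (u m (pcyl n x))) @ \oo --> lim_mass n x.
Proof.
have -> : (fun m => fine (u m (pcyl n x))) = expR \o log_mass n x.
  by apply/funext => m; rewrite /= /log_mass lnK // posrE pcylE fine_cyl_gt0.
by apply: continuous_cvg; [exact: continuous_expR|exact: cvgn_log_mass].
Qed.

Lemma lim_mass0 x : lim_mass 0 x = 1.
Proof.
rewrite -(cvg_lim (@Rhausdorff R) (@measure_pcyl_cvg 0 x)); apply: cvg_lim => //.
by under eq_fun do rewrite pcyl0 probability_setT /=; exact: cvg_cst.
Qed.

Lemma eq_lim_mass n x y : (forall i, (i < n)%N -> x i = y i) ->
  lim_mass n x = lim_mass n y.
Proof. by move=> xy; rewrite /lim_mass /log_mass (eq_pcyl xy). Qed.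

Lemma lim_mass_split n x :
  lim_mass n x = \sum_(c <- letters) lim_mass n.+1 (upd x n c).
Proof.
rewrite -(cvg_lim (@Rhausdorff R) (@measure_pcyl_cvg n x)); apply: cvg_lim => //.
have -> : (fun m => fine (u m (pcyl n x))) =
    (fun m => \sum_(c <- letters) fine (u m (pcyl n.+1 (upd x n c)))).
  apply/funext => m; rewrite measure_pcyl_split sum_fine // => c _.
  by apply: fin_num_measure; exact: measurable_pcyl.
apply: cvg_big => [|c _]; [exact: add_continuous|exact: measure_pcyl_cvg].
Qed.

Definition rho_limit : probability (Xborel A) R :=
  consistent_prob finA lim_mass0 (fun n x => expR_ge0 _) eq_lim_mass lim_mass_split.

Lemma rho_limit_pos : fully_supported rho_limit.
Proof. by move=> n a; rewrite cylE consistent_probE lte_fin expR_gt0. Qed.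

Lemma rho_limit_cvg e : 0 < e -> exists N, forall m, (N <= m)%N ->
  (rho (u m) rho_limit < e%:E)%E.
Proof.
move=> e_gt0; have e2_gt0 : 0 < e / 2 by rewrite divr_gt0.
have [N close] := u_cauchy e2_gt0; exists N => m le_Nm.
apply: (@le_lt_trans _ _ (e / 2)%:E); last by rewrite lte_fin ltr_pdivrMr // ltr_pMr // ltr1n.
rewrite rhoE //; last exact: rho_limit_pos.
apply: ge_ereal_sup => _ [n [a ->]]; rewrite lee_fin /rho_term.
rewrite cylE consistent_probE /= expRK ler_pdivrMl // -/(log_mass n.+1 _ m).
set w := nth point a.
have dist_cvg : (fun k => `|log_mass n.+1 w m - log_mass n.+1 w k|) @ \oo -->
    `|log_mass n.+1 w m - limn (log_mass n.+1 w)|.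
  by apply: cvg_norm; apply: cvgB; [exact: cvg_cst|exact: cvgn_log_mass].
rewrite -(cvg_lim (@Rhausdorff R) dist_cvg); apply: limr_le; first exact: cvgP dist_cvg.
by exists N => // k /= le_Nk; exact: log_mass_dist close _ _ _ _ le_Nm le_Nk.
Qed.

End Completeness.

Unset Implicit Arguments.

Theorem theorem2p1 (A : pointedType) (R : realType)
    (hA : finite_set [set: A]) :
  (* rho is an (extended) metric on M^+(X) *)
  (forall mu nu : probability (Xborel A) R,
      fully_supported mu -> fully_supported nu ->
      (0 <= rho mu nu)%E /\
      rho mu nu = rho nu mu /\
      (rho mu nu = 0%E <->
        (forall B : set (Xborel A), measurable B -> mu B = nu B))) /\
  (forall mu nu eta : probability (Xborel A) R,
      fully_supported mu -> fully_supported nu -> fully_supported eta ->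
      (rho mu eta <= rho mu nu + rho nu eta)%E) /\
  (* completeness: every rho-Cauchy sequence in M^+(X) converges in M^+(X) *)
  (forall u : nat -> probability (Xborel A) R,
      (forall k, fully_supported (u k)) ->
      (forall e : R, 0 < e -> exists N : nat, forall m k : nat,
          (N <= m)%N -> (N <= k)%N -> (rho (u m) (u k) < e%:E)%E) ->
      exists nu : probability (Xborel A) R,
        fully_supported nu /\
        (forall e : R, 0 < e -> exists N : nat, forall m : nat,
            (N <= m)%N -> (rho (u m) nu < e%:E)%E)).
Proof.
split; [|split].
- move=> mu nu mu_pos nu_pos.
  by split; [exact: rho_ge0|split; [exact: rhoC|exact: rho_eq0P]].
- exact: rho_triangle.
- move=> u u_pos u_cauchy; exists (rho_limit hA u_pos u_cauchy).
  by split; [exact: rho_limit_pos|exact: rho_limit_cvg].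
Qed.
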